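(* For every three-qubit state $\rho_{ABC}$ (pure or mixed), at most two of the three numbers $S_{AB}, S_{AC}, S_{BC}$ exceed $1$; that is, at most two of the three two-qubit reduced states violate the three-settings CJWR linear steering inequality. Moreover, steering can be non-monogamous in this scenario: there exists a three-qubit state for which two of the reduced states violate the three-settings CJWR linear steering inequality (two of $S_{AB}, S_{AC}, S_{BC}$ exceed $1$).
   Context: For a two-qubit state $\rho$ let $T=[t_{kl}]$ with $t_{kl}=\mathrm{Tr}[\rho\,\sigma_k\otimes\sigma_l]$ ($k,l\in\{1,2,3\}$, $\sigma_k$ the Pauli matrices) be its correlation matrix and $S(\rho)=\mathrm{Tr}[T^{T}T]=\sum_{k,l}t_{kl}^2$. For a three-qubit state $\rho_{ABC}$, $\rho_{AB},\rho_{AC},\rho_{BC}$ denote its two-qubit reduced states and $S_{ij}=S(\rho_{ij})$. The three-settings CJWR linear steering inequality for a two-qubit state $\rho$ reads $F_3(\rho,\mu)=\frac{1}{\sqrt3}\left|\sum_{k=1}^{3}\langle A_k\otimes B_k\rangle\right|\le 1$, where $A_k=\hat a_k\cdot\vec\sigma$ with unit vectors $\hat a_k\in\mathbb R^3$, $B_k=\hat b_k\cdot\vec\sigma$ with orthonormal vectors $\hat b_k\in\mathbb R^3$, $\mu$ the set of these directions, and $\langle X\rangle=\mathrm{Tr}[\rho X]$. Its maximum over all measurement settings $\mu$ equals $\sqrt{S(\rho)}$, so $\rho$ violates the inequality (is ''$F_3$ steerable'') if and only if $S(\rho)>1$. *)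

From HB Require Import structures.
From mathcomp Require Import all_boot all_order all_algebra.
From mathcomp Require Import mxtens.
Set Implicit Arguments. Unset Strict Implicit. Unset Printing Implicit Defensive.
Import Order.TTheory GRing.Theory Num.Theory.
Local Open Scope ring_scope.

Section Qubits.
Variable C : numClosedFieldType.

Definition adjmx m n (A : 'M[C]_(m, n)) : 'M[C]_(n, m) :=
  \matrix_(i, j) (A j i)^*.

Definition is_density n (rho : 'M[C]_n) : Prop :=
  [/\ adjmx rho = rho,
      (forall v : 'cV[C]_n, 0 <= (adjmx v *m rho *m v) 0 0)
    & \tr rho = 1].

(* Pauli matrices sigma_1, sigma_2, sigma_3 (indexed by k = 0, 1, 2) *)
Definition pauli (k : 'I_3) : 'M[C]_2 :=
  \matrix_(a, b)
    match val k with
    | 0 => if a == b then 0 else 1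
    | 1 => if a == b then 0 else if val a == 0 then - 'i else 'i
    | _ => if a == b then (if val a == 0 then 1 else -1) else 0
    end.

Definition corr (rho : 'M[C]_(2 * 2)) (k l : 'I_3) : C :=
  \tr (rho *m (pauli k *t pauli l)).

(* S(rho) = Tr[T^T T] = sum_{k,l} t_kl^2 *)
Definition Sval (rho : 'M[C]_(2 * 2)) : C :=
  \sum_(k < 3) \sum_(l < 3) corr rho k l ^+ 2.

(* three-qubit basis index |a b c>, ordering A (x) B (x) C *)
Definition idx3 (a b c : 'I_2) : 'I_(2 * 2 * 2) :=
  mxtens_index (mxtens_index (a, b), c).

Definition fst2 (i : 'I_(2 * 2)) : 'I_2 := (mxtens_unindex i).1.
Definition snd2 (i : 'I_(2 * 2)) : 'I_2 := (mxtens_unindex i).2.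

Definition rhoAB (rho : 'M[C]_(2 * 2 * 2)) : 'M[C]_(2 * 2) :=
  \matrix_(i, j) \sum_(c < 2) rho (idx3 (fst2 i) (snd2 i) c) (idx3 (fst2 j) (snd2 j) c).
Definition rhoAC (rho : 'M[C]_(2 * 2 * 2)) : 'M[C]_(2 * 2) :=
  \matrix_(i, j) \sum_(b < 2) rho (idx3 (fst2 i) b (snd2 i)) (idx3 (fst2 j) b (snd2 j)).
Definition rhoBC (rho : 'M[C]_(2 * 2 * 2)) : 'M[C]_(2 * 2) :=
  \matrix_(i, j) \sum_(a < 2) rho (idx3 a (fst2 i) (snd2 i)) (idx3 a (fst2 j) (snd2 j)).

End Qubits.

(* For a pure state psi, the correlation sums of the three two-qubit reductions
   satisfy the polynomial identity S_AB + S_AC + S_BC = 3 <psi|psi>^2.  Every t_kl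
   is a real linear function of a Hermitian state, so S is convex; writing a mixed
   state as the convex combination of its eigenprojectors gives
   S_AB + S_AC + S_BC <= 3, hence the three numbers cannot all exceed 1.  The state
   (4|100> + 4|010> + 7|001>)/9 has S_AC = S_BC = 8673/6561 > 1. *)

From HB Require Import structures.
From mathcomp Require Import all_boot all_order all_algebra.
From mathcomp Require Import mxtens sesquilinear spectral.
From mathcomp Require Import ring.
Set Implicit Arguments. Unset Strict Implicit. Unset Printing Implicit Defensive.
Import Order.TTheory GRing.Theory Num.Theory.
Local Open Scope ring_scope.

Section BigQubit.
Variable R : nmodType.

(* Finite sums over ['I_2] and ['I_3] written out, so that nested sums
   expand by unfolding instead of by one rewrite per summand. *)
Definition sum2 (F : 'I_2 -> R) : R := F (@Ordinal 2 0 isT) + F (@Ordinal 2 1 isT).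
Definition sum3 (F : 'I_3 -> R) : R :=
  F (@Ordinal 3 0 isT) + F (@Ordinal 3 1 isT) + F (@Ordinal 3 2 isT).

Lemma big_ord2 (F : 'I_2 -> R) :
  \sum_(i < 2) F i = F (@Ordinal 2 0 isT) + F (@Ordinal 2 1 isT).
Proof. by rewrite big_ord_recl big_ord1; congr (F _ + F _); apply: val_inj. Qed.

Lemma big_ord3 (F : 'I_3 -> R) :
  \sum_(i < 3) F i = F (@Ordinal 3 0 isT) + F (@Ordinal 3 1 isT) + F (@Ordinal 3 2 isT).
Proof.
by rewrite !big_ord_recl big_ord0 addr0 addrA; congr (F _ + F _ + F _); apply: val_inj.
Qed.

Lemma big_mxtens m n (F : 'I_(m * n) -> R) :
  \sum_i F i = \sum_(a < m) \sum_(b < n) F (mxtens_index (a, b)).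
Proof.
rewrite pair_big (reindex (@mxtens_index m n)) /=; first by apply: eq_bigr => -[].
by exists (@mxtens_unindex m n) => x _; rewrite ?mxtens_indexK ?mxtens_unindexK.
Qed.

Lemma big_idx3 (F : 'I_(2 * 2 * 2) -> R) :
  \sum_i F i = \sum_(a < 2) \sum_(b < 2) \sum_(c < 2) F (idx3 a b c).
Proof. by rewrite big_mxtens (big_mxtens (fun ab => \sum_(c < 2) F (mxtens_index (ab, c)))). Qed.

End BigQubit.

Lemma fst2E (a b : 'I_2) : fst2 (mxtens_index (a, b)) = a.
Proof. by rewrite /fst2 mxtens_indexK. Qed.

Lemma snd2E (a b : 'I_2) : snd2 (mxtens_index (a, b)) = b.
Proof. by rewrite /snd2 mxtens_indexK. Qed.

Section DensityMatrices.
Variable C : numClosedFieldType.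

Lemma adjmxE m n (A : 'M[C]_(m, n)) : adjmx A = (A ^t*)%sesqui.
Proof. by apply/matrixP => i j; rewrite !mxE. Qed.

Definition rank1mx n (x y : 'I_n -> C) : 'M[C]_n := \matrix_(i, j) (x i * y j).

Lemma adjmx_rank1_conj n (v : 'I_n -> C) :
  adjmx (rank1mx (fun i => (v i)^*) v) = rank1mx (fun i => (v i)^*) v.
Proof. by apply/matrixP => i j; rewrite !mxE rmorphM /= conjCK mulrC. Qed.

Lemma rank1_conj_density n (v : 'I_n -> C) :
  \sum_i (v i)^* * v i = 1 -> is_density (rank1mx (fun i => (v i)^*) v).
Proof.
move=> v_norm1; split; first exact: adjmx_rank1_conj.
- move=> w; set z := \sum_i v i * w i 0.
  have -> : (adjmx w *m rank1mx (fun i => (v i)^*) v *m w) 0 0 = z^* * z.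
    rewrite mxE big_distrr /=; apply: eq_bigr => j _.
    rewrite mxE rmorph_sum !big_distrl /=; apply: eq_bigr => i _.
    by rewrite !mxE rmorphM /=; ring.
  by rewrite mulrC mul_conjC_ge0.
- by rewrite -v_norm1 /mxtrace; apply: eq_bigr => i _; rewrite mxE.
Qed.

Lemma spectral_row_norm n (A : 'M[C]_n) m :
  \sum_i (spectralmx A m i)^* * spectralmx A m i = 1.
Proof.
have /unitarymxP/matrixP/(_ m m) := spectral_unitarymx A.
rewrite !mxE eqxx mulr1n => <-.
by apply: eq_bigr => i _; rewrite !mxE mulrC.
Qed.

Local Open Scope sesquilinear_scope.
Variables (n : nat) (rho : 'M[C]_n).
Hypothesis rho_density : is_density rho.
Let P := spectralmx rho.
Let d := spectral_diag rho.

Lemma density_spectral : rho = P ^t* *m diag_mx d *m P.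
Proof.
have rho_herm : rho \is hermsymmx.
  case: rho_density => rho_adj _ _; apply/is_hermitianmxP.
  by rewrite expr0 scale1r -{1}rho_adj adjmxE.
have /orthomx_spectralP {1}-> := hermitian_normalmx rho_herm.
by rewrite invmx_unitary ?spectral_unitarymx.
Qed.

Lemma spectral_diag_ge0 m : 0 <= d 0 m.
Proof.
case: rho_density => _ rho_psd _.
have PPt : P *m P ^t* = 1%:M by apply/unitarymxP/spectral_unitarymx.
have rowPPt : row m P *m P ^t* = delta_mx 0 m by rewrite -row_mul PPt row1.
have ProwPt : P *m (row m P) ^t* = delta_mx m 0.
  by rewrite -[P in P *m _]trmxCK -map_mxM -trmx_mul rowPPt trmx_delta map_delta_mx.
have := rho_psd ((row m P) ^t*).
rewrite adjmxE trmxCK density_spectral !mulmxA rowPPt -!mulmxA ProwPt.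
by rewrite mulmxA -rowE -colE !mxE eqxx mulr1n.
Qed.

Lemma spectral_diag_sum1 : \sum_m d 0 m = 1.
Proof.
case: rho_density => _ _ <-.
have PPt : P *m P ^t* = 1%:M by apply/unitarymxP/spectral_unitarymx.
by rewrite density_spectral mxtrace_mulC mulmxA PPt mul1mx mxtrace_diag.
Qed.

Lemma density_pure_decomposition :
  rho = \sum_m d 0 m *: rank1mx (fun i => (P m i)^*) (P m).
Proof.
apply/matrixP => i j; rewrite {1}density_spectral mul_mx_diag !mxE summxE.
by apply: eq_bigr => m _; rewrite !mxE mulrCA mulrA.
Qed.
End DensityMatrices.

Section Correlations.
Variable C : numClosedFieldType.
Implicit Types (r : 'M[C]_(2 * 2)) (k l : 'I_3).

Definition pauli_phase k : C := if val k == 1%N then 'i else 1.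
Definition pauli_sign k : C := if val k == 1%N then -1 else 1.

Definition pauli_coef k (a b : 'I_2) : C :=
  match val k, val a, val b with
  | 0, 0, 1 | 0, 1, 0 => 1
  | 0, _, _ => 0
  | 1, 0, 1 => -1
  | 1, 1, 0 => 1
  | 1, _, _ => 0
  | _, 0, 0 => 1
  | _, 1, 1 => -1
  | _, _, _ => 0
  end.

Lemma pauliE k a b : pauli C k a b = pauli_phase k * pauli_coef k a b.
Proof.
rewrite mxE /pauli_phase /pauli_coef.
by case: k => [[|[|[|k]]] ?] //=; case: a => [[|[|a]] ?] //=; case: b => [[|[|b]] ?] //=;
  rewrite ?mul1r ?mulr1 ?mulr0 ?mulrN1.
Qed.

Lemma pauli_phase_sqr k : pauli_phase k ^+ 2 = pauli_sign k.
Proof. by rewrite /pauli_phase /pauli_sign; case: eqP; rewrite ?sqrCi ?expr1n. Qed.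

Lemma pauli_conj k a b : (pauli C k a b)^* = pauli C k b a.
Proof.
rewrite !mxE.
case: k => [[|[|[|k]]] ?] //=; case: a => [[|[|a]] ?] //=; case: b => [[|[|b]] ?] //=.
all: by rewrite ?rmorph0 ?rmorph1 ?rmorphN1 ?conjCi // -conjCi conjCK.
Qed.

Lemma corrE r k l : corr r k l =
  \sum_(a < 2) \sum_(b < 2) \sum_(a' < 2) \sum_(b' < 2)
     r (mxtens_index (a, b)) (mxtens_index (a', b')) * (pauli C k a' a * pauli C l b' b).
Proof.
rewrite /corr /mxtrace big_mxtens; apply: eq_bigr => a _; apply: eq_bigr => b _.
rewrite mxE big_mxtens; apply: eq_bigr => a' _; apply: eq_bigr => b' _.
by rewrite tensmxE.
Qed.

Definition corr_coef r k l : C :=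
  sum2 (fun a => sum2 (fun b => sum2 (fun a' => sum2 (fun b' =>
    r (mxtens_index (a, b)) (mxtens_index (a', b')) * (pauli_coef k a' a * pauli_coef l b' b))))).

Lemma corr_phase r k l : corr r k l = pauli_phase k * pauli_phase l * corr_coef r k l.
Proof. by rewrite corrE !big_ord2 /corr_coef /sum2 /= !pauliE; ring. Qed.

Lemma Sval_sign r :
  Sval r = sum3 (fun k => sum3 (fun l => pauli_sign k * pauli_sign l * corr_coef r k l ^+ 2)).
Proof.
by rewrite /Sval !big_ord3 /sum3 !corr_phase !exprMn !pauli_phase_sqr.
Qed.

Lemma corr_real r k l : adjmx r = r -> corr r k l \is Num.real.
Proof.
move=> r_adj; have r_conj i j : (r i j)^* = r j i by rewrite -[in RHS]r_adj mxE.
apply/CrealP; rewrite corrE !big_ord2 !rmorphD !rmorphM /= !r_conj !pauli_conj.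
ring.
Qed.

Lemma corr_sum n (d : 'I_n -> C) (A : 'I_n -> 'M[C]_(2 * 2)) k l :
  corr (\sum_m d m *: A m) k l = \sum_m d m * corr (A m) k l.
Proof.
rewrite /corr mulmx_suml linear_sum /=.
by apply: eq_bigr => m _; rewrite -scalemxAl mxtraceZ.
Qed.

End Correlations.

Section Convexity.
Variable C : numClosedFieldType.

Lemma sqr_wavg_le n (d u : 'I_n -> C) :
  (forall m, 0 <= d m) -> \sum_m d m = 1 -> (forall m, u m \is Num.real) ->
  (\sum_m d m * u m) ^+ 2 <= \sum_m d m * u m ^+ 2.
Proof.
move=> d_ge0 d_sum1 u_real; set U := \sum_m d m * u m.
have U_real : U \is Num.real.
  by apply: rpred_sum => m _; apply: rpredM; [apply: ger0_real | apply: u_real].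
have : 0 <= \sum_m d m * (u m - U) ^+ 2.
  by apply: sumr_ge0 => m _; rewrite mulr_ge0 // -realEsqr rpredB.
have -> : \sum_m d m * (u m - U) ^+ 2 = \sum_m d m * u m ^+ 2 - U ^+ 2.
  rewrite (eq_bigr (fun m => d m * u m ^+ 2 - 2 * U * (d m * u m) + U ^+ 2 * d m)).
    by rewrite big_split sumrB /= -!mulr_sumr d_sum1 -/U; ring.
  by move=> m _; ring.
by rewrite subr_ge0.
Qed.

Lemma Sval_convex n (d : 'I_n -> C) (A : 'I_n -> 'M[C]_(2 * 2)) :
  (forall m, 0 <= d m) -> \sum_m d m = 1 -> (forall m, adjmx (A m) = A m) ->
  Sval (\sum_m d m *: A m) <= \sum_m d m * Sval (A m).
Proof.
move=> d_ge0 d_sum1 A_adj; rewrite /Sval.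
under [X in _ <= X]eq_bigr do rewrite mulr_sumr.
rewrite [X in _ <= X]exchange_big /=; apply: ler_sum => k _.
under [X in _ <= X]eq_bigr do rewrite mulr_sumr.
rewrite [X in _ <= X]exchange_big /=; apply: ler_sum => l _.
by rewrite corr_sum sqr_wavg_le // => m; apply: corr_real.
Qed.

End Convexity.

Section Marginals.
Variable C : numClosedFieldType.

(* [rhoAB], [rhoAC] and [rhoBC] are, up to conversion, [marginal g] for
   [g a b c] equal to [idx3 a b c], [idx3 a c b] and [idx3 c a b]. *)
Definition marginal (g : 'I_2 -> 'I_2 -> 'I_2 -> 'I_(2 * 2 * 2))
    (rho : 'M[C]_(2 * 2 * 2)) : 'M[C]_(2 * 2) :=
  \matrix_(i, j) \sum_(c < 2) rho (g (fst2 i) (snd2 i) c) (g (fst2 j) (snd2 j) c).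

Lemma marginal_sum g n (d : 'I_n -> C) (A : 'I_n -> 'M[C]_(2 * 2 * 2)) :
  marginal g (\sum_m d m *: A m) = \sum_m d m *: marginal g (A m).
Proof.
apply/matrixP => i j; rewrite !mxE summxE.
under eq_bigr do rewrite summxE.
rewrite exchange_big /=; apply: eq_bigr => m _.
by rewrite !mxE mulr_sumr; apply: eq_bigr => c _; rewrite !mxE.
Qed.

Lemma marginal_adj g (rho : 'M[C]_(2 * 2 * 2)) :
  adjmx rho = rho -> adjmx (marginal g rho) = marginal g rho.
Proof.
move=> rho_adj; apply/matrixP => i j; rewrite !mxE rmorph_sum.
by apply: eq_bigr => c _; rewrite -[in RHS]rho_adj mxE.
Qed.

Lemma Sval_marginal_convex g n (d : 'I_n -> C) (A : 'I_n -> 'M[C]_(2 * 2 * 2)) :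
  (forall m, 0 <= d m) -> \sum_m d m = 1 -> (forall m, adjmx (A m) = A m) ->
  Sval (marginal g (\sum_m d m *: A m)) <= \sum_m d m * Sval (marginal g (A m)).
Proof.
move=> d_ge0 d_sum1 A_adj; rewrite marginal_sum Sval_convex // => m.
exact: marginal_adj.
Qed.

Lemma marginal_rank1E g (x y : 'I_(2 * 2 * 2) -> C) a b a' b' :
  marginal g (rank1mx x y) (mxtens_index (a, b)) (mxtens_index (a', b')) =
  x (g a b (@Ordinal 2 0 isT)) * y (g a' b' (@Ordinal 2 0 isT)) +
  x (g a b (@Ordinal 2 1 isT)) * y (g a' b' (@Ordinal 2 1 isT)).
Proof. by rewrite mxE !fst2E !snd2E big_ord2 !mxE. Qed.

Lemma Sval_rank1_marginals (x y : 'I_(2 * 2 * 2) -> C) :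
  Sval (rhoAB (rank1mx x y)) + Sval (rhoAC (rank1mx x y)) + Sval (rhoBC (rank1mx x y)) =
  3 * (\sum_i x i * y i) ^+ 2.
Proof.
rewrite -[rhoAB _]/(marginal idx3 _) -[rhoAC _]/(marginal (fun a b c => idx3 a c b) _).
rewrite -[rhoBC _]/(marginal (fun a b c => idx3 c a b) _).
rewrite !Sval_sign /sum3 /corr_coef /sum2 /= !marginal_rank1E big_idx3 !big_ord2 /=.
rewrite /pauli_sign /pauli_coef /=.
ring.
Qed.

End Marginals.

Lemma Sval_marginals_le3 (C : numClosedFieldType) (rho : 'M[C]_(2 * 2 * 2)) :
  is_density rho -> Sval (rhoAB rho) + Sval (rhoAC rho) + Sval (rhoBC rho) <= 3.
Proof.
move=> rho_density.
pose d := spectral_diag rho 0; pose P := spectralmx rho.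
pose R m := rank1mx (fun i => (P m i)^*) (P m).
have d_ge0 : forall m, 0 <= d m := spectral_diag_ge0 rho_density.
have d_sum1 : \sum_m d m = 1 := spectral_diag_sum1 rho_density.
have R_adj m : adjmx (R m) = R m := adjmx_rank1_conj (P m).
have rhoE : rho = \sum_m d m *: R m := density_pure_decomposition rho_density.
have le_AB : Sval (rhoAB rho) <= \sum_m d m * Sval (rhoAB (R m)).
  by rewrite rhoE; exact: (Sval_marginal_convex idx3).
have le_AC : Sval (rhoAC rho) <= \sum_m d m * Sval (rhoAC (R m)).
  by rewrite rhoE; exact: (Sval_marginal_convex (fun a b c => idx3 a c b)).
have le_BC : Sval (rhoBC rho) <= \sum_m d m * Sval (rhoBC (R m)).
  by rewrite rhoE; exact: (Sval_marginal_convex (fun a b c => idx3 c a b)).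
apply: le_trans (lerD (lerD le_AB le_AC) le_BC) _.
rewrite -!big_split /=.
under eq_bigr do rewrite -!mulrDr Sval_rank1_marginals spectral_row_norm expr1n mulr1.
by rewrite -mulr_suml d_sum1 mul1r.
Qed.

Section Witness.
Variable C : numClosedFieldType.

(* [ninth] stays an opaque atom for [ring]; only [9 * ninth = 1] is used. *)
Definition ninth : C := 9^-1.

Lemma ninth_ge0 : 0 <= ninth. Proof. by rewrite invr_ge0 ler0n. Qed.
Lemma mul9_ninth : 9 * ninth = 1. Proof. by rewrite mulfV // pnatr_eq0. Qed.

Definition witness_weight (a b c : 'I_2) : nat :=
  match val a, val b, val c with
  | 1, 0, 0 | 0, 1, 0 => 4
  | 0, 0, 1 => 7
  | _, _, _ => 0
  end.

Definition witness (i : 'I_(2 * 2 * 2)) : C :=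
  let: (ab, c) := mxtens_unindex i in
  (witness_weight (mxtens_unindex ab).1 (mxtens_unindex ab).2 c)%:R * ninth.

Lemma witnessE a b c : witness (idx3 a b c) = (witness_weight a b c)%:R * ninth.
Proof. by rewrite /witness /idx3 !mxtens_indexK. Qed.

Lemma witness_conj i : (witness i)^* = witness i.
Proof.
apply/conj_Creal/ger0_real; rewrite /witness; case: mxtens_unindex => ab c.
by rewrite mulr_ge0 ?ler0n ?ninth_ge0.
Qed.

Let rho0 := rank1mx (fun i => (witness i)^*) witness.

Lemma witness_density : is_density rho0.
Proof.
apply: rank1_conj_density.
rewrite big_idx3 !big_ord2 !witness_conj !witnessE /witness_weight /=.
transitivity ((9 * ninth) ^+ 2 : C); first ring.
by rewrite mul9_ninth expr1n.
Qed.

Lemma Sval_witness_AC : Sval (rhoAC rho0) = 8673 * ninth ^+ 4.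
Proof.
rewrite -[rhoAC _]/(marginal (fun a b c => idx3 a c b) _).
rewrite Sval_sign /sum3 /corr_coef /sum2 /= !marginal_rank1E /=.
rewrite !witness_conj !witnessE /pauli_sign /pauli_coef /witness_weight /=.
ring.
Qed.

Lemma Sval_witness_BC : Sval (rhoBC rho0) = 8673 * ninth ^+ 4.
Proof.
rewrite -[rhoBC _]/(marginal (fun a b c => idx3 c a b) _).
rewrite Sval_sign /sum3 /corr_coef /sum2 /= !marginal_rank1E /=.
rewrite !witness_conj !witnessE /pauli_sign /pauli_coef /witness_weight /=.
ring.
Qed.

Lemma Sval_witness_gt1 : 1 < 8673 * ninth ^+ 4.
Proof. by rewrite /ninth exprVn -natrX ltr_pdivlMr ?ltr0n // mul1r ltr_nat. Qed.

Lemma exists_two_steerable :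
  exists rho : 'M[C]_(2 * 2 * 2), is_density rho /\ 1 < Sval (rhoAC rho) /\ 1 < Sval (rhoBC rho).
Proof.
exists rho0; split; first exact: witness_density.
by rewrite Sval_witness_AC Sval_witness_BC Sval_witness_gt1.
Qed.

End Witness.

Theorem theorem1 (C : numClosedFieldType) :
  (forall rho : 'M[C]_(2 * 2 * 2), is_density rho ->
     ~ [/\ 1 < Sval (rhoAB rho), 1 < Sval (rhoAC rho) & 1 < Sval (rhoBC rho)])
  /\
  (exists rho : 'M[C]_(2 * 2 * 2), is_density rho /\
     [|| (1 < Sval (rhoAB rho)) && (1 < Sval (rhoAC rho)),
         (1 < Sval (rhoAB rho)) && (1 < Sval (rhoBC rho))
       | (1 < Sval (rhoAC rho)) && (1 < Sval (rhoBC rho))]).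
Proof.
split.
- move=> rho rho_density [gtAB gtAC gtBC].
  have := lt_le_trans (ltrD (ltrD gtAB gtAC) gtBC) (Sval_marginals_le3 rho_density).
  by rewrite (_ : 1 + 1 + 1 = 3) ?ltxx //; ring.
- have [rho [rho_density [gtAC gtBC]]] := exists_two_steerable C.
  by exists rho; rewrite gtAC gtBC !orbT.
Qed.
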